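(* Let $X=\{a_1,\dots,a_n\}$ be a finite topological space with furtherness matrix $\Psi(X)$. Then $X$ is $T_0$ if and only if all rows of $\Psi(X)$ are pairwise distinct, and $X$ is $T_0$ if and only if all columns of $\Psi(X)$ are pairwise distinct.
   Context: For a finite topological space $X$ and $x\in X$, $U_x$ denotes the minimal open set containing $x$. A nested sequence of open sets around $x$ is a finite sequence $U_0\subsetneq U_1\subsetneq\cdots\subsetneq U_m=X$ of open sets with $U_0=U_x$ such that for each $j$ there is no open set $V$ with $U_j\subsetneq V\subsetneq U_{j+1}$. The furtherness function $\Psi:X\times X\to\{0,1,\dots,|X|-1\}$ is defined by: $\Psi(x,y)$ is the smallest integer $k\ge 0$ such that there exists a nested sequence $(U_j)_{j\ge0}$ of open sets around $x$ with $y\in U_k$. The furtherness matrix $\Psi(X)$ is the $n\times n$ matrix with $(i,j)$ entry $\Psi(a_i,a_j)$. *)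

From HB Require Import structures.
From mathcomp Require Import all_boot all_order all_algebra.
Set Implicit Arguments. Unset Strict Implicit. Unset Printing Implicit Defensive.

Section FiniteTop.
Variable T : finType.

(* O is a topology on the finite set T (finite unions/intersections suffice). *)
Definition is_topology (O : {set {set T}}) : Prop :=
  [/\ set0 \in O, setT \in O,
      (forall U V, U \in O -> V \in O -> U :|: V \in O) &
      (forall U V, U \in O -> V \in O -> U :&: V \in O)].

Definition Umin (O : {set {set T}}) (x : T) : {set T} :=
  \bigcap_(U in O | x \in U) U.

(* A nested sequence of open sets around x : U_0 ⊊ U_1 ⊊ ... ⊊ U_m = X,
   U_0 = U_x, with no open set strictly between consecutive terms;
   represented as a finite function on 'I_(m+1). *)
Definition nested_seq (O : {set {set T}}) (x : T) (m : nat)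
    (U : {ffun 'I_m.+1 -> {set T}}) : bool :=
  [&& U ord0 == Umin O x, U ord_max == setT,
      [forall i : 'I_m.+1, U i \in O] &
      [forall i : 'I_m,
         (U (widen_ord (leqnSn m) i) \proper U (lift ord0 i)) &&
         [forall V in O, ~~ ((U (widen_ord (leqnSn m) i) \proper V)
                             && (V \proper U (lift ord0 i)))]]].

(* there is a nested sequence around x with y in U_k.  A strict chain of
   subsets of T has at most #|T|+1 members, so the bound m <= #|T| is vacuous. *)
Definition furth_at (O : {set {set T}}) (x y : T) (k : nat) : bool :=
  [exists m : 'I_#|T|.+1,
     [exists U : {ffun 'I_(nat_of_ord m).+1 -> {set T}},
        [&& nested_seq O x U, k <= m & y \in U (inord k)]]].

Definition Psi (O : {set {set T}}) (x y : T) : nat :=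
  find (furth_at O x y) (iota 0 #|T|.+1).

Definition furth_mx (O : {set {set T}}) : 'M[nat]_#|T| :=
  \matrix_(i, j) Psi O (enum_val i) (enum_val j).

Definition T0 (O : {set {set T}}) : Prop :=
  forall x y : T, x != y -> exists2 U, U \in O & (x \in U) != (y \in U).

End FiniteTop.

From mathcomp Require Import all_boot all_order all_algebra.
Set Implicit Arguments. Unset Strict Implicit. Unset Printing Implicit Defensive.

(* Psi x y = 0 exactly when y lies in the minimal open set U_x: a maximal
   chain of open sets from U_x up to X always exists, so the value 0 is
   attained iff y \in U_x.  The diagonal of the furtherness matrix is
   therefore 0, and equal rows (or equal columns) at x and y force
   Psi x y = Psi y x = 0, i.e. y \in U_x and x \in U_y, which makes x and y
   topologically indistinguishable.  Conversely, indistinguishable points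
   have the same minimal open set and lie in the same open sets, hence give
   identical rows and columns. *)

Section MatrixOfEnum.
Variables (T : finType) (R : eqType).

Definition enum_mx (f : T -> T -> R) : 'M[R]_#|T| :=
  \matrix_(i, j) f (enum_val i) (enum_val j).

Lemma enum_mx_rows_distinct (f : T -> T -> R) :
  (forall i j : 'I_#|T|, i != j -> row i (enum_mx f) != row j (enum_mx f))
  <-> (forall x y, f x =1 f y -> x = y).
Proof.
split=> [distinct x y fxy | f_inj i j].
- apply/eqP/negPn/negP => xy.
  have := distinct (enum_rank x) (enum_rank y).
  rewrite (inj_eq enum_rank_inj) xy => /(_ isT) /eqP; apply.
  by apply/matrixP => a b; rewrite !mxE !enum_rankK fxy.
- apply: contraNneq => /matrixP rows_ij.
  suff /f_inj /enum_val_inj -> : f (enum_val i) =1 f (enum_val j) by [].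
  move=> z; have := rows_ij ord0 (enum_rank z).
  by rewrite !mxE enum_rankK.
Qed.

Lemma enum_mx_cols_distinct (f : T -> T -> R) :
  (forall i j : 'I_#|T|, i != j -> col i (enum_mx f) != col j (enum_mx f))
  <-> (forall x y, f ^~ x =1 f ^~ y -> x = y).
Proof.
have trE : trmx (enum_mx f) = enum_mx (fun x y => f y x).
  by apply/matrixP => i j; rewrite !mxE.
have colE i j : (col i (enum_mx f) == col j (enum_mx f))
  = (row i (enum_mx (fun x y => f y x)) == row j (enum_mx (fun x y => f y x))).
  by rewrite -(inj_eq trmx_inj) !tr_col trE.
apply: iff_trans (enum_mx_rows_distinct (fun x y => f y x)).
by split=> distinct i j /distinct; rewrite colE.
Qed.

End MatrixOfEnum.

Section FurthernessMatrix.
Variables (T : finType) (O : {set {set T}}).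
Hypothesis hO : is_topology O.

Lemma Umin_open x : Umin O x \in O.
Proof.
case: hO => _ OT _ OI; apply: (big_ind (fun S => S \in O)) => //.
by move=> U /andP[].
Qed.

Lemma mem_Umin x : x \in Umin O x.
Proof. by apply/bigcapP => U /andP[]. Qed.

Lemma Umin_sub x U : U \in O -> x \in U -> Umin O x \subset U.
Proof. by move=> UO xU; apply: bigcap_inf; rewrite UO xU. Qed.

(* The covering relation of the poset of open sets (not an open cover of A). *)
Definition open_cover (A B : {set T}) : bool :=
  (A \proper B) && [forall V in O, ~~ ((A \proper V) && (V \proper B))].

Lemma open_cover_exists A : A \in O -> A != setT ->
  exists2 B, B \in O & open_cover A B.
Proof.
case: hO => _ OT _ _ AO AnT.
pose P B := (B \in O) && (A \proper B).
have PT : P setT by rewrite /P OT properT.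
case: (@arg_minnP _ setT P (fun B => #|B|) PT) => B /andP[BO AB] Bmin.
exists B => //; rewrite /open_cover AB; apply/forall_inP => V VO.
apply/andP => -[AV VB].
by have := Bmin V; rewrite /P VO AV leqNgt (proper_card VB) => /(_ isT).
Qed.

Lemma open_chain_exists A : A \in O ->
  exists m (f : nat -> {set T}), [/\ f 0 = A, f m = setT, m <= #|~: A|,
    forall i, i <= m -> f i \in O & forall i, i < m -> open_cover (f i) (f i.+1)].
Proof.
have OT : setT \in O by case: hO.
move: {2}#|~: A| (leqnn #|~: A|) => n.
elim: n A => [|n IH] A sizeA AO; case: (eqVneq A setT) => [-> | AnT];
  try by exists 0, (fun=> setT); split=> // i; rewrite ltn0.
  by move: sizeA AnT; rewrite leqn0 cards_eq0 -setCT (inj_eq (@setC_inj _)) => ->.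
have [B BO AcovB] := open_cover_exists AO AnT.
have sizeB : #|~: B| < #|~: A|.
  by apply: proper_card; rewrite properC; case/andP: AcovB.
have [m [f [f0 fm mB fO fcov]]] := IH B (leq_trans sizeB sizeA) BO.
exists m.+1, (fun i => if i is j.+1 then f j else A); split=> //.
- exact: leq_ltn_trans mB sizeB.
- by case.
- by case=> [_ | i /fcov]; rewrite ?f0.
Qed.

Lemma furth_at0 x y : furth_at O x y 0 = (y \in Umin O x).
Proof.
apply/idP/idP.
  case/existsP => m /existsP [U /and3P [/and4P [/eqP U0 _ _ _] _]].
  have inord0 : inord 0 = ord0 :> 'I_m.+1 by apply: val_inj; rewrite /= inordK.
  by rewrite inord0 U0.
move=> yUx.
have [m [f [f0 fm mle fO fcov]]] := open_chain_exists (Umin_open x).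
have mT : m < #|T|.+1 by rewrite ltnS (leq_trans mle) // max_card.
apply/existsP; exists (Ordinal mT); apply/existsP; exists [ffun i : 'I_m.+1 => f i].
rewrite /nested_seq !ffunE inordK //= f0 fm yUx !eqxx andbT /=.
apply/andP; split; apply/forallP => i; rewrite !ffunE ?lift0.
  by apply: fO; rewrite -ltnS.
exact: fcov (ltn_ord i).
Qed.

Lemma Psi_eq0 x y : (Psi O x y == 0) = (y \in Umin O x).
Proof. by rewrite /Psi /= furth_at0; case: (y \in Umin O x). Qed.

Lemma Psi_xx x : Psi O x x = 0.
Proof. by apply/eqP; rewrite Psi_eq0 mem_Umin. Qed.

Definition indist (x y : T) : bool := [forall U in O, (x \in U) == (y \in U)].

Lemma T0P : T0 O <-> (forall x y, indist x y -> x = y).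
Proof.
split=> [t0 x y /forall_inP xy | sep x y].
  by apply/eqP/negPn/negP => /t0 [U UO]; rewrite xy.
move=> xy; apply/exists_inP; apply: contraNT xy => /exists_inPn xy.
by apply/eqP/sep/forall_inP => U /xy; rewrite negbK.
Qed.

Lemma indist_Umin x y : indist x y -> Umin O x = Umin O y.
Proof.
move=> /forall_inP xy; apply: eq_bigl => U.
by case: (boolP (U \in O)) => //= /xy /eqP.
Qed.

Lemma mem_Umin_indist x y : y \in Umin O x -> x \in Umin O y -> indist x y.
Proof.
move=> yUx xUy; apply/forall_inP => U UO; apply/eqP; apply/idP/idP => [xU | yU].
  exact: subsetP (Umin_sub UO xU) _ yUx.
exact: subsetP (Umin_sub UO yU) _ xUy.
Qed.

Lemma Psi_indist_row x y : indist x y -> Psi O x =1 Psi O y.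
Proof. by move=> /indist_Umin Uxy z; rewrite /Psi /furth_at /nested_seq Uxy. Qed.

Lemma Psi_indist_col x y : indist x y -> Psi O ^~ x =1 Psi O ^~ y.
Proof.
move=> /forall_inP xy z; apply: eq_find => k.
apply: eq_existsb => m; apply: eq_existsb => U.
case Unest: (nested_seq O z U) => //=; case: (k <= m) => //=.
by apply/eqP/xy; case/and4P: Unest => _ _ /forallP.
Qed.

Lemma T0_Psi_rows : T0 O <-> (forall x y, Psi O x =1 Psi O y -> x = y).
Proof.
apply: iff_trans T0P _; split=> sep x y; last by move/Psi_indist_row; apply: sep.
by move=> Pxy; apply/sep/mem_Umin_indist; rewrite -Psi_eq0 ?(Pxy y) -?(Pxy x) Psi_xx.
Qed.

Lemma T0_Psi_cols : T0 O <-> (forall x y, Psi O ^~ x =1 Psi O ^~ y -> x = y).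
Proof.
apply: iff_trans T0P _; split=> sep x y; last by move/Psi_indist_col; apply: sep.
by move=> Pxy; apply/sep/mem_Umin_indist; rewrite -Psi_eq0 -?(Pxy x) ?(Pxy y) Psi_xx.
Qed.

End FurthernessMatrix.

Theorem mainTheorem14 (T : finType) (O : {set {set T}}) (hO : is_topology O) :
  (T0 O <-> (forall i j : 'I_#|T|, i != j -> row i (furth_mx O) != row j (furth_mx O)))
  /\
  (T0 O <-> (forall i j : 'I_#|T|, i != j -> col i (furth_mx O) != col j (furth_mx O))).
Proof.
split.
  exact: iff_trans (T0_Psi_rows hO) (iff_sym (enum_mx_rows_distinct (Psi O))).
exact: iff_trans (T0_Psi_cols hO) (iff_sym (enum_mx_cols_distinct (Psi O))).
Qed.
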